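(* Let $A$ be a C*-algebra and $A_1,A_2\subset A$ two C*-subalgebras. Then $A_1$ and $A_2$ mutually commute in $A$ (every element of $A_1$ commutes with every element of $A_2$) if and only if the monotone map $$r: C(A)\to C(A_1)\times C(A_2),\qquad C\mapsto (C\cap A_1,\,C\cap A_2)$$ has a left adjoint.
   Context: All C*-algebras are unital and subalgebras contain the unit. For a C*-algebra $B$, $C(B)$ denotes the poset of commutative C*-subalgebras of $B$ ordered by inclusion; $C(A_1)\times C(A_2)$ carries the product order. Posets are regarded as categories, so adjoints are Galois connections. *)

From mathcomp Require Import all_boot all_algebra.
From mathcomp Require Import reals.
From mathcomp.real_closed Require Import complex.
Import GRing.Theory Num.Theory.
Set Implicit Arguments. Unset Strict Implicit. Unset Printing Implicit Defensive.
Local Open Scope ring_scope.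
Local Open Scope complex_scope.

Section CStar.
Variables (R : realType) (A : algType R[i]).
Variables (star : A -> A) (nrm : A -> R).

Definition is_cstar_algebra : Prop :=
  (forall x, 0 <= nrm x) /\
  (forall x, nrm x = 0 -> x = 0) /\
  (forall x y, nrm (x + y) <= nrm x + nrm y) /\
  (forall (c : R[i]) x, (nrm (c *: x))%:C = `|c| * (nrm x)%:C) /\
  (forall x y, nrm (x * y) <= nrm x * nrm y) /\
  (forall u : nat -> A,
     (forall e : R, 0 < e -> exists N : nat, forall m n : nat,
        (N <= m)%N -> (N <= n)%N -> nrm (u m - u n) < e) ->
     exists a : A, forall e : R, 0 < e -> exists N : nat, forall n : nat,
        (N <= n)%N -> nrm (u n - a) < e) /\
  (forall x, star (star x) = x) /\
  (forall x y, star (x + y) = star x + star y) /\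
  (forall (c : R[i]) x, star (c *: x) = c^* *: star x) /\
  (forall x y, star (x * y) = star y * star x) /\
  (forall x, nrm (star x * x) = nrm x ^+ 2).

Definition nclosed (S : A -> Prop) : Prop :=
  forall (u : nat -> A) (a : A), (forall n, S (u n)) ->
    (forall e : R, 0 < e -> exists N : nat, forall n : nat,
       (N <= n)%N -> nrm (u n - a) < e) -> S a.

Definition is_cstar_subalg (S : A -> Prop) : Prop :=
  S 1 /\
  (forall x y, S x -> S y -> S (x + y)) /\
  (forall (c : R[i]) x, S x -> S (c *: x)) /\
  (forall x y, S x -> S y -> S (x * y)) /\
  (forall x, S x -> S (star x)) /\
  nclosed S.

Definition commutative_set (S : A -> Prop) : Prop :=
  forall x y, S x -> S y -> x * y = y * x.

(* membership in C(B) for a C*-subalgebra B of A: commutative C*-subalgebras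
   of A contained in B (equivalently, commutative C*-subalgebras of B) *)
Definition in_CB (B : A -> Prop) (S : A -> Prop) : Prop :=
  [/\ is_cstar_subalg S, commutative_set S & (forall x, S x -> B x)].

Definition subset (S T : A -> Prop) : Prop := forall x, S x -> T x.

Definition setI (S T : A -> Prop) : A -> Prop := fun x => S x /\ T x.

Definition mutually_commute (A1 A2 : A -> Prop) : Prop :=
  forall x y, A1 x -> A2 y -> x * y = y * x.

(* r : C(A) -> C(A1) x C(A2), C |-> (C cap A1, C cap A2) has a left adjoint
   (in posets: a monotone l with l(D1,D2) <= C  <->  (D1,D2) <= r C) *)
Definition r_has_left_adjoint (A1 A2 : A -> Prop) : Prop :=
  exists l : (A -> Prop) -> (A -> Prop) -> (A -> Prop),
    (forall D1 D2, in_CB A1 D1 -> in_CB A2 D2 -> in_CB (fun _ => True) (l D1 D2)) /\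
    (forall D1 D2 E1 E2, in_CB A1 D1 -> in_CB A2 D2 -> in_CB A1 E1 -> in_CB A2 E2 ->
       subset D1 E1 -> subset D2 E2 -> subset (l D1 D2) (l E1 E2)) /\
    (forall D1 D2 C, in_CB A1 D1 -> in_CB A2 D2 -> in_CB (fun _ => True) C ->
       (subset (l D1 D2) C <->
        (subset D1 (setI C A1) /\ subset D2 (setI C A2)))).

End CStar.

(* Forward: if A1 and A2 commute, the C*-algebra generated by D1 u D2 is
   commutative (the commutant of a self-adjoint set is a C*-subalgebra, so a
   commutative self-adjoint set generates a commutative algebra), and it is the
   least element of C(A) containing D1 and D2, i.e. the left adjoint.
   Backward: for self-adjoint h in A1 and k in A2, the unit of the adjunction
   puts h and k into the single commutative algebra l(C*(h), C*(k)), so they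
   commute; every element is a combination of two self-adjoint elements of the
   same subalgebra. *)
From Pilot Require Import Defs.
From mathcomp Require Import all_boot all_order all_algebra.
From mathcomp Require Import reals.
From mathcomp.real_closed Require Import complex.
From mathcomp Require Import lra.
Import Order.TTheory GRing.Theory Num.Theory.
Set Implicit Arguments. Unset Strict Implicit.
Local Open Scope ring_scope.
Local Open Scope complex_scope.

Lemma commrZ (R : comNzRingType) (A : algType R) (a s : A) (c : R) :
  GRing.comm a s -> GRing.comm a (c *: s).
Proof. by rewrite /GRing.comm -scalerAl -scalerAr => ->. Qed.

Lemma cartesian_decomp (R : realType) (A : lmodType R[i]) (star : A -> A) (z : A) :
  z = 2^-1 *: (z + star z) + (2^-1 * - 'i) *: ('i *: (z - star z)).
Proof.
rewrite scalerA -mulrA mulNr -expr2 sqr_i opprK mulr1 -scalerDr.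
by rewrite addrACA subrr addr0 -mulr2n -scalerMnr scalerMnl -mulr_natr mulVf ?scale1r ?pnatr_eq0.
Qed.

Section CStarAlgebra.
Variables (R : realType) (A : algType R[i]) (star : A -> A) (nrm : A -> R).
Hypothesis cstarA : is_cstar_algebra star nrm.

Definition star_closed (S : A -> Prop) : Prop := forall s, S s -> S (star s).

Definition commutant (S : A -> Prop) : A -> Prop :=
  fun x => forall s, S s -> x * s = s * x.

Definition cstar_gen (S : A -> Prop) : A -> Prop :=
  fun x => forall T, is_cstar_subalg star nrm T -> Defs.subset S T -> T x.

Section Subalgebra.
Variable S : A -> Prop.
Hypothesis subS : is_cstar_subalg star nrm S.

Lemma subalgD x y : S x -> S y -> S (x + y).
Proof. by case: subS => _ [P _]; exact: P. Qed.

Lemma subalgZ c x : S x -> S (c *: x).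
Proof. by case: subS => _ [_ [P _]]; exact: P. Qed.

Lemma subalgM x y : S x -> S y -> S (x * y).
Proof. by case: subS => _ [_ [_ [P _]]]; exact: P. Qed.

Lemma subalg_star : star_closed S.
Proof. by case: subS => _ [_ [_ [_ [P _]]]]; exact: P. Qed.

Lemma subalg_re z : S z -> S (z + star z).
Proof. by move=> Sz; apply: subalgD (subalg_star Sz). Qed.

Lemma subalg_im z : S z -> S ('i *: (z - star z)).
Proof.
by move=> Sz; apply/subalgZ/(subalgD Sz); rewrite -scaleN1r; apply/subalgZ/subalg_star.
Qed.

End Subalgebra.

Lemma nrm_ge0 x : 0 <= nrm x.
Proof. by case: cstarA => P _; exact: P. Qed.

Lemma nrm_eq0 x : nrm x = 0 -> x = 0.
Proof. by case: cstarA => _ [P _]; exact: P. Qed.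

Lemma nrm_small_eq0 x : (forall e, 0 < e -> nrm x < e) -> x = 0.
Proof.
move=> small; apply: nrm_eq0; case: (ltrP 0 (nrm x)) => [pos | le0].
  by have := small _ pos; rewrite ltxx.
by apply/eqP; rewrite eq_le le0 nrm_ge0.
Qed.

Lemma nrmD x y : nrm (x + y) <= nrm x + nrm y.
Proof. by case: cstarA => _ [_ [P _]]; exact: P. Qed.

Lemma nrmN x : nrm (- x) = nrm x.
Proof.
case: cstarA => _ [_ [_ [nrmZ _]]].
by apply: complexI; rewrite -scaleN1r nrmZ normrN1 mul1r.
Qed.

Lemma nrmM x y : nrm (x * y) <= nrm x * nrm y.
Proof. by case: cstarA => _ [_ [_ [_ [P _]]]]; exact: P. Qed.

Lemma starK x : star (star x) = x.
Proof. by case: cstarA => _ [_ [_ [_ [_ [_ [P _]]]]]]; exact: P. Qed.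

Lemma starD x y : star (x + y) = star x + star y.
Proof. by case: cstarA => _ [_ [_ [_ [_ [_ [_ [P _]]]]]]]; exact: P. Qed.

Lemma starZ c x : star (c *: x) = c^* *: star x.
Proof. by case: cstarA => _ [_ [_ [_ [_ [_ [_ [_ [P _]]]]]]]]; exact: P. Qed.

Lemma starM x y : star (x * y) = star y * star x.
Proof. by case: cstarA => _ [_ [_ [_ [_ [_ [_ [_ [_ [P _]]]]]]]]]; exact: P. Qed.

Lemma starN x : star (- x) = - star x.
Proof. by rewrite -scaleN1r starZ rmorphN1 scaleN1r. Qed.

Lemma star_re z : star (z + star z) = z + star z.
Proof. by rewrite starD starK addrC. Qed.

Lemma star_im z : star ('i *: (z - star z)) = 'i *: (z - star z).
Proof. by rewrite starZ starD starN starK conjCi scaleNr -scalerN opprB. Qed.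

Lemma cstar_gen_subalg S : is_cstar_subalg star nrm (cstar_gen S).
Proof.
split; [|split; [|split; [|split; [|split]]]].
- by move=> T [].
- by move=> x y Sx Sy T subT ST; apply: (subalgD subT); [apply: Sx | apply: Sy].
- by move=> c x Sx T subT ST; apply: (subalgZ subT); apply: Sx.
- by move=> x y Sx Sy T subT ST; apply: (subalgM subT); [apply: Sx | apply: Sy].
- by move=> x Sx T subT ST; apply: (subalg_star subT); apply: Sx.
- move=> u a Su lim_u T subT ST; have [_ [_ [_ [_ [_ Tclosed]]]]] := subT.
  by apply: (Tclosed u a) => // n; apply: Su.
Qed.

Lemma sub_cstar_gen S : Defs.subset S (cstar_gen S).
Proof. by move=> x Sx T _; apply. Qed.

Lemma cstar_gen_min S T :
  is_cstar_subalg star nrm T -> Defs.subset S T -> Defs.subset (cstar_gen S) T.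
Proof. by move=> subT ST x; apply. Qed.

Lemma nrm_commutator_le u a s :
  u * s = s * u -> nrm (a * s - s * a) <= 2 * nrm (u - a) * nrm s.
Proof.
move=> us_su.
have -> : a * s - s * a = - ((u - a) * s) + s * (u - a).
  by rewrite mulrBl mulrBr us_su opprB addrA subrK.
apply: le_trans (nrmD _ _) _; rewrite nrmN.
apply: le_trans (lerD (nrmM _ _) (nrmM _ _)) _.
by rewrite [nrm s * _]mulrC -mulrA; lra.
Qed.

Lemma commutant_nclosed S : nclosed nrm (commutant S).
Proof.
move=> u a Su lim_u s Ss; apply/eqP; rewrite -subr_eq0; apply/eqP.
apply: nrm_small_eq0 => e e_gt0.
have s1_gt0 : 0 < 2 * (nrm s + 1) by have := nrm_ge0 s; lra.
have [N closeN] := lim_u (e / (2 * (nrm s + 1))) (divr_gt0 e_gt0 s1_gt0).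
have := closeN N (leqnn N); rewrite ltr_pdivlMr //.
have := nrm_commutator_le a (Su N s Ss).
have := nrm_ge0 s; have := nrm_ge0 (u N - a); nra.
Qed.

Lemma commutant_subalg S : star_closed S -> is_cstar_subalg star nrm (commutant S).
Proof.
move=> starS; split; [|split; [|split; [|split; [|split]]]].
- by move=> s _; rewrite mul1r mulr1.
- by move=> x y Cx Cy s Ss; rewrite mulrDl mulrDr Cx // Cy.
- by move=> c x Cx s Ss; rewrite -scalerAl -scalerAr Cx.
- by move=> x y Cx Cy s Ss; rewrite -mulrA Cy // mulrA Cx // mulrA.
- by move=> x Cx s Ss; rewrite -[s]starK -!starM (Cx _ (starS _ Ss)).
- exact: commutant_nclosed.
Qed.

(* A commutative self-adjoint set lies in its own commutant, so its generated
   algebra does; then that algebra lies in the commutant of itself. *)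
Lemma cstar_gen_commutative S :
  star_closed S -> commutative_set S -> commutative_set (cstar_gen S).
Proof.
move=> starS commS.
have gen_comm_S : Defs.subset (cstar_gen S) (commutant S).
  by apply: cstar_gen_min; [exact: commutant_subalg | move=> x Sx s Ss; exact: commS].
have gen_comm_gen : Defs.subset (cstar_gen S) (commutant (cstar_gen S)).
  apply: cstar_gen_min; first exact: commutant_subalg (subalg_star (cstar_gen_subalg S)).
  by move=> x Sx g Sg; rewrite (gen_comm_S g Sg x Sx).
by move=> x y Sx Sy; apply: gen_comm_gen.
Qed.

Lemma in_CB_cstar_gen (B S : A -> Prop) :
  star_closed S -> commutative_set S -> Defs.subset (cstar_gen S) B ->
  in_CB star nrm B (cstar_gen S).
Proof.
by move=> starS commS genB; split; [exact: cstar_gen_subalg | exact: cstar_gen_commutative |].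
Qed.

Lemma left_adjoint_of_mutually_commute A1 A2 :
  mutually_commute A1 A2 -> r_has_left_adjoint star nrm A1 A2.
Proof.
move=> commA12; exists (fun D1 D2 => cstar_gen (fun x => D1 x \/ D2 x)).
split; [|split].
- move=> D1 D2 [subD1 commD1 D1A1] [subD2 commD2 D2A2].
  apply: in_CB_cstar_gen => //.
    by move=> s [D1s | D2s]; [left; apply: (subalg_star subD1) | right; apply: (subalg_star subD2)].
  move=> x y [D1x | D2x] [D1y | D2y]; first exact: commD1; last exact: commD2.
    by apply: commA12; [apply: D1A1 | apply: D2A2].
  by symmetry; apply: commA12; [apply: D1A1 | apply: D2A2].
- move=> D1 D2 E1 E2 _ _ _ _ DE1 DE2.
  apply: cstar_gen_min; first exact: cstar_gen_subalg.
  by move=> x [D1x | D2x]; apply: sub_cstar_gen; [left; apply: DE1 | right; apply: DE2].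
- move=> D1 D2 C [_ _ D1A1] [_ _ D2A2] [subC _ _]; split.
  + by move=> genC; split=> x Dx; split; by [apply: genC; apply: sub_cstar_gen; tauto | auto].
  + move=> [D1C D2C]; apply: cstar_gen_min => // x [D1x | D2x].
    * by have [] := D1C x D1x.
    * by have [] := D2C x D2x.
Qed.

Lemma in_CB_selfadjoint B h :
  is_cstar_subalg star nrm B -> B h -> star h = h ->
  in_CB star nrm B (cstar_gen (fun z => z = h)).
Proof.
move=> subB Bh hsa; apply: in_CB_cstar_gen.
- by move=> s ->.
- by move=> x y -> ->.
- by apply: cstar_gen_min => // z ->.
Qed.

Lemma selfadjoint_commute_of_left_adjoint A1 A2 h k :
  is_cstar_subalg star nrm A1 -> is_cstar_subalg star nrm A2 ->
  r_has_left_adjoint star nrm A1 A2 ->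
  A1 h -> A2 k -> star h = h -> star k = k -> h * k = k * h.
Proof.
move=> subA1 subA2 [l [l_in_CB [_ l_adj]]] A1h A2k hsa ksa.
have Dh := in_CB_selfadjoint subA1 A1h hsa.
have Dk := in_CB_selfadjoint subA2 A2k ksa.
have [_ commC _] := l_in_CB _ _ Dh Dk.
have [hC kC] := (l_adj _ _ _ Dh Dk (l_in_CB _ _ Dh Dk)).1 (fun x lx => lx).
have [Ch _] := hC h (sub_cstar_gen (erefl h)).
have [Ck _] := kC k (sub_cstar_gen (erefl k)).
exact: commC.
Qed.

Lemma mutually_commute_of_selfadjoint A1 A2 :
  is_cstar_subalg star nrm A1 -> is_cstar_subalg star nrm A2 ->
  (forall h k, A1 h -> A2 k -> star h = h -> star k = k -> h * k = k * h) ->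
  mutually_commute A1 A2.
Proof.
move=> subA1 subA2 commsa x y A1x A2y.
have comm_y h : A1 h -> star h = h -> GRing.comm h y.
  move=> A1h hsa; rewrite (cartesian_decomp star y).
  apply: commrD; apply: commrZ; apply: commsa; rewrite ?star_re ?star_im //.
    exact: (subalg_re subA2).
  exact: (subalg_im subA2).
rewrite (cartesian_decomp star x); apply/commr_sym.
apply: commrD; apply: commrZ; apply/commr_sym/comm_y; rewrite ?star_re ?star_im //.
  exact: (subalg_re subA1).
exact: (subalg_im subA1).
Qed.

Lemma mutually_commute_of_left_adjoint A1 A2 :
  is_cstar_subalg star nrm A1 -> is_cstar_subalg star nrm A2 ->
  r_has_left_adjoint star nrm A1 A2 -> mutually_commute A1 A2.
Proof.
move=> subA1 subA2 adj; apply: mutually_commute_of_selfadjoint => // h k.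
exact: selfadjoint_commute_of_left_adjoint.
Qed.

End CStarAlgebra.

Theorem mainTheorem2 (R : realType) (A : algType R[i])
    (star : A -> A) (nrm : A -> R)
    (HA : is_cstar_algebra star nrm)
    (A1 A2 : A -> Prop)
    (H1 : is_cstar_subalg star nrm A1) (H2 : is_cstar_subalg star nrm A2) :
  mutually_commute A1 A2 <-> r_has_left_adjoint star nrm A1 A2.
Proof.
split; first exact: left_adjoint_of_mutually_commute.
exact: mutually_commute_of_left_adjoint.
Qed.
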